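(* No twisted differential operator is globally hypo-elliptic.
   Context: $D_x=-\mathrm i\partial_x$, $D_y=-\mathrm i\partial_y$, $M_x,M_y$ multiplication by $x,y$ on $\mathbb R^2$. A twisted differential operator of order $m$ is $A=\sum_{j+k\le m}(-1)^{j+k}a_{kj}(\alpha D_y-\beta M_x)^j(\gamma D_x-\delta M_y)^k$ with $\alpha,\beta,\gamma,\delta\in\mathbb R$, $\alpha\delta-\beta\gamma=1$, $\beta\delta\ne0$, $a_{kj}\in\mathbb C$, $\sum_{j+k=m}|a_{kj}|\ne0$. The symbol of a differential operator written as $\sum_{|\alpha|\le m}a_\alpha(x)D^\alpha$ (coefficients to the left, $D_j=-\mathrm i\partial_j$) is $a(x,\xi)=\sum_{|\alpha|\le m}a_\alpha(x)\xi^\alpha$. An operator on $\mathcal S'(\mathbb R^n)$ with polynomial symbol $a(x,\xi)$ is globally hypo-elliptic if $a$ does not vanish outside a compact subset of $\mathbb R^{2n}$ and $\lim_{|x|+|\xi|\to\infty}\partial_x^\alpha\partial_\xi^\beta a(x,\xi)/a(x,\xi)=0$ for all $|\alpha|+|\beta|=1$. *)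

From Stdlib Require Import Reals ClassicalEpsilon List.
Open Scope R_scope.

Definition Cx := (R * R)%type.
Definition C0 : Cx := (0, 0).
Definition CR (r : R) : Cx := (r, 0).
Definition Ci : Cx := (0, 1).
Definition Cadd (a b : Cx) : Cx := (fst a + fst b, snd a + snd b).
Definition Cmul (a b : Cx) : Cx :=
  (fst a * fst b - snd a * snd b, fst a * snd b + snd a * fst b).
Definition Cnorm (a : Cx) : R := sqrt (fst a ^ 2 + snd a ^ 2).
Definition Cinv (a : Cx) : Cx :=
  let n2 := fst a ^ 2 + snd a ^ 2 in (fst a / n2, - snd a / n2).
Definition Cdiv (a b : Cx) : Cx := Cmul a (Cinv b).
Definition Cpow (a : Cx) (n : nat) : Cx := Nat.iter n (Cmul a) (CR 1).

Fixpoint sumC (n : nat) (g : nat -> Cx) : Cx :=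
  match n with O => C0 | S n' => Cadd (sumC n' g) (g n') end.

(** * Derivatives (total, via choice; equal to the derivative when it exists) *)
Definition rderiv (g : R -> R) (t : R) : R :=
  epsilon (inhabits 0) (fun l => derivable_pt_lim g t l).
Definition cderiv (g : R -> Cx) (t : R) : Cx :=
  (rderiv (fun s => fst (g s)) t, rderiv (fun s => snd (g s)) t).
Definition cderivable (g : R -> Cx) (t : R) : Prop :=
  (exists l, derivable_pt_lim (fun s => fst (g s)) t l) /\
  (exists l, derivable_pt_lim (fun s => snd (g s)) t l).

Definition Fn := R -> R -> Cx.
Definition pdx (f : Fn) : Fn := fun x y => cderiv (fun t => f t y) x.
Definition pdy (f : Fn) : Fn := fun x y => cderiv (fun t => f x t) y.
Definition mI : Cx := (0, -1).
Definition Dx (f : Fn) : Fn := fun x y => Cmul mI (pdx f x y).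
Definition Dy (f : Fn) : Fn := fun x y => Cmul mI (pdy f x y).
Definition Mx (f : Fn) : Fn := fun x y => Cmul (CR x) (f x y).
Definition My (f : Fn) : Fn := fun x y => Cmul (CR y) (f x y).

Definition iter_pd (w : list bool) (f : Fn) : Fn :=
  fold_right (fun (b : bool) g => if b then pdx g else pdy g) f w.
Definition smooth (f : Fn) : Prop :=
  forall (w : list bool) (x y : R),
    cderivable (fun t => iter_pd w f t y) x /\ cderivable (fun t => iter_pd w f x t) y.

(** * Twisted differential operators
    A = sum_{j+k<=m} (-1)^(j+k) a_{kj} (al D_y - be M_x)^j (ga D_x - de M_y)^k,
    with the coefficient a_{kj} written [a k j]. *)
Definition Pop (al be : R) (g : Fn) : Fn :=
  fun x y => Cadd (Cmul (CR al) (Dy g x y)) (Cmul (CR (- be)) (Mx g x y)).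
Definition Qop (ga de : R) (g : Fn) : Fn :=
  fun x y => Cadd (Cmul (CR ga) (Dx g x y)) (Cmul (CR (- de)) (My g x y)).

Definition twisted (al be ga de : R) (a : nat -> nat -> Cx) (m : nat) (f : Fn) : Fn :=
  fun x y =>
    sumC (S m) (fun j => sumC (S (m - j)) (fun k =>
      Cmul (Cmul (CR ((-1) ^ (j + k))) (a k j))
           (Nat.iter j (Pop al be) (Nat.iter k (Qop ga de) f) x y))).

Definition twisted_data (al be ga de : R) (a : nat -> nat -> Cx) (m : nat) : Prop :=
  al * de - be * ga = 1 /\ be * de <> 0 /\
  (exists j, (j <= m)%nat /\ a (m - j)%nat j <> C0).

(** * Differential operators with polynomial coefficients, written with the
    coefficients on the left:
      sum_{p,q,r,s <= N} c p q r s  x^p y^q  D_x^r D_y^s,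
    i.e. sum_alpha a_alpha(x) D^alpha with a_(r,s)(x,y) = sum_{p,q} c p q r s x^p y^q. *)
Definition sum4 (N : nat) (g : nat -> nat -> nat -> nat -> Cx) : Cx :=
  sumC (S N) (fun p => sumC (S N) (fun q => sumC (S N) (fun r => sumC (S N)
    (fun s => g p q r s)))).

Definition polyop (N : nat) (c : nat -> nat -> nat -> nat -> Cx) (f : Fn) : Fn :=
  fun x y => sum4 N (fun p q r s =>
    Cmul (Cmul (c p q r s) (CR (x ^ p * y ^ q)))
         (Nat.iter r Dx (Nat.iter s Dy f) x y)).

Definition symbol (N : nat) (c : nat -> nat -> nat -> nat -> Cx)
  : R -> R -> R -> R -> Cx :=
  fun x y xi eta => sum4 N (fun p q r s =>
    Cmul (c p q r s) (CR (x ^ p * y ^ q * xi ^ r * eta ^ s))).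

Definition nrm4 (x y xi eta : R) : R :=
  sqrt (x ^ 2 + y ^ 2) + sqrt (xi ^ 2 + eta ^ 2).

Definition Sym := R -> R -> R -> R -> Cx.
Definition pd1 (a : Sym) : Sym := fun x y u v => cderiv (fun t => a t y u v) x.
Definition pd2 (a : Sym) : Sym := fun x y u v => cderiv (fun t => a x t u v) y.
Definition pd3 (a : Sym) : Sym := fun x y u v => cderiv (fun t => a x y t v) u.
Definition pd4 (a : Sym) : Sym := fun x y u v => cderiv (fun t => a x y u t) v.

Definition glob_hypoell (a : Sym) : Prop :=
  (* a does not vanish outside a compact (= closed bounded) set *)
  (exists R0 : R, forall x y u v, nrm4 x y u v > R0 -> a x y u v <> C0) /\
  (forall d : Sym -> Sym, In d (pd1 :: pd2 :: pd3 :: pd4 :: nil) ->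
     forall eps : R, eps > 0 -> exists R1 : R, forall x y u v,
       nrm4 x y u v > R1 -> Cnorm (Cdiv (d a x y u v) (a x y u v)) < eps).

(* Plane waves e^{i(x xi + y eta)} diagonalise both kinds of operators.  A twisted
   operator multiplies the wave by F(al eta - be x, ga xi - de y), where F is a
   polynomial whose part of degree m is sum_{j+k=m} (-1)^m a_{kj} u^j v^k <> 0, while an
   operator with left coefficients multiplies it by its symbol; so the symbol is F
   composed with a linear map which, as be de <> 0, is onto even from outside any ball.
   Global hypo-ellipticity then makes F nowhere zero and forces dF/du / F and dF/dv / F
   to vanish identically, so F is constant: impossible in degree m >= 1. *)

From Stdlib Require Import Bool Reals Lra Lia List FunctionalExtensionality ClassicalEpsilon Classical.
Open Scope R_scope.

Lemma Cx_ext (a b : Cx) : fst a = fst b -> snd a = snd b -> a = b.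
Proof. destruct a, b; simpl; intros -> ->; reflexivity. Qed.

Ltac Cx_ring :=
  repeat match goal with c : Cx |- _ => destruct c end;
  apply Cx_ext; unfold Cadd, Cmul, CR, C0, mI; simpl; ring.

Lemma Cnorm2_pos (z : Cx) : z <> C0 -> 0 < fst z ^ 2 + snd z ^ 2.
Proof.
  destruct z as [z1 z2]; simpl; intros Hz.
  destruct (Req_dec z1 0), (Req_dec z2 0); subst; try nra.
  now destruct Hz.
Qed.

Lemma Cnorm_pos (z : Cx) : z <> C0 -> 0 < Cnorm z.
Proof. intros Hz; apply sqrt_lt_R0, Cnorm2_pos, Hz. Qed.

Lemma Cdiv_neq0 (a b : Cx) : a <> C0 -> b <> C0 -> Cdiv a b <> C0.
Proof.
  intros Ha Hb Hab; apply Ha.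
  assert (Hn := Cnorm2_pos b Hb).
  assert (E : Cmul (Cdiv a b) b = a).
  { destruct a as [a1 a2], b as [b1 b2]; simpl in Hn.
    apply Cx_ext; unfold Cdiv, Cmul, Cinv; simpl; field; lra. }
  rewrite <- E, Hab; Cx_ring.
Qed.

Lemma Cmul_CR_eq0 (r : R) (z : Cx) : r <> 0 -> Cmul (CR r) z = C0 -> z = C0.
Proof.
  destruct z as [z1 z2]; unfold Cmul, CR, C0; simpl; intros Hr E.
  injection E as E1 E2.
  f_equal; apply (Rmult_eq_reg_l r); lra.
Qed.

Lemma Cmul_unit_cancel (a b z : Cx) :
  fst z ^ 2 + snd z ^ 2 = 1 -> Cmul a z = Cmul b z -> a = b.
Proof.
  intros Hz E.
  assert (Ez : forall w, Cmul (Cmul w z) (fst z, - snd z) = Cmul w (CR (fst z ^ 2 + snd z ^ 2)))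
    by (intros; Cx_ring).
  pose proof (Ez a) as Ea; pose proof (Ez b) as Eb.
  rewrite E, Eb, Hz in Ea.
  apply Cx_ext; [apply (f_equal fst) in Ea | apply (f_equal snd) in Ea]; simpl in Ea; lra.
Qed.

Lemma sumC_ext n f g : (forall i, (i < n)%nat -> f i = g i) -> sumC n f = sumC n g.
Proof.
  induction n as [|n IH]; simpl; intros H; [reflexivity|].
  rewrite IH, H; [reflexivity | lia | intros; apply H; lia].
Qed.

Lemma sumC_Cmul_r n g z : sumC n (fun i => Cmul (g i) z) = Cmul (sumC n g) z.
Proof. induction n as [|n IH]; simpl; [|rewrite IH]; Cx_ring. Qed.

Lemma sumC_eq0 n f : (forall i, (i < n)%nat -> f i = C0) -> sumC n f = C0.
Proof.
  induction n as [|n IH]; simpl; intros H; [reflexivity|].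
  rewrite IH, H; [Cx_ring | lia | intros; apply H; lia].
Qed.

Lemma sumC_single n f i0 :
  (i0 < n)%nat -> (forall i, (i < n)%nat -> i <> i0 -> f i = C0) -> sumC n f = f i0.
Proof.
  induction n as [|n IH]; simpl; intros Hi0 H; [lia|].
  destruct (Nat.eq_dec i0 n) as [->|Hne].
  - rewrite sumC_eq0 by (intros; apply H; lia); Cx_ring.
  - rewrite IH, (H n); [Cx_ring | lia | auto | lia | intros; apply H; lia].
Qed.

Lemma derivable_pt_lim_val (f : R -> R) (x l l' : R) :
  derivable_pt_lim f x l -> l = l' -> derivable_pt_lim f x l'.
Proof. now intros H <-. Qed.

Lemma rderiv_eq (g : R -> R) (t l : R) : derivable_pt_lim g t l -> rderiv g t = l.
Proof.
  intros H; unfold rderiv.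
  apply (uniqueness_limite g t); [|exact H].
  exact (epsilon_spec (inhabits 0) (fun l => derivable_pt_lim g t l) (ex_intro _ l H)).
Qed.

Definition is_cderiv (g : R -> Cx) (t : R) (l : Cx) : Prop :=
  derivable_pt_lim (fun s => fst (g s)) t (fst l) /\
  derivable_pt_lim (fun s => snd (g s)) t (snd l).

Lemma is_cderiv_cderiv g t l : is_cderiv g t l -> cderiv g t = l.
Proof.
  intros [H1 H2]; unfold cderiv.
  rewrite (rderiv_eq _ _ _ H1), (rderiv_eq _ _ _ H2).
  now destruct l.
Qed.

Lemma is_cderiv_cderivable g t l : is_cderiv g t l -> cderivable g t.
Proof. intros [H1 H2]; split; eauto. Qed.

Lemma is_cderiv_val g t l l' : is_cderiv g t l -> l = l' -> is_cderiv g t l'.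
Proof. now intros H <-. Qed.

Lemma is_cderiv_const (k : Cx) t : is_cderiv (fun _ => k) t C0.
Proof. split; apply derivable_pt_lim_const. Qed.

Lemma is_cderiv_CR (r : R -> R) t r' :
  derivable_pt_lim r t r' -> is_cderiv (fun s => CR (r s)) t (CR r').
Proof. split; [exact H | apply derivable_pt_lim_const]. Qed.

Lemma is_cderiv_add g h t a b :
  is_cderiv g t a -> is_cderiv h t b ->
  is_cderiv (fun s => Cadd (g s) (h s)) t (Cadd a b).
Proof.
  intros [Hg1 Hg2] [Hh1 Hh2]; split;
  [exact (derivable_pt_lim_plus _ _ t _ _ Hg1 Hh1)
  |exact (derivable_pt_lim_plus _ _ t _ _ Hg2 Hh2)].
Qed.

Lemma is_cderiv_mul g h t a b :
  is_cderiv g t a -> is_cderiv h t b ->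
  is_cderiv (fun s => Cmul (g s) (h s)) t (Cadd (Cmul a (h t)) (Cmul (g t) b)).
Proof.
  intros [Hg1 Hg2] [Hh1 Hh2]; split; simpl.
  - eapply derivable_pt_lim_val.
    + apply derivable_pt_lim_minus; apply derivable_pt_lim_mult; eassumption.
    + cbv beta; ring.
  - eapply derivable_pt_lim_val.
    + apply derivable_pt_lim_plus; apply derivable_pt_lim_mult; eassumption.
    + cbv beta; ring.
Qed.

Lemma is_cderiv_scale (K : Cx) g t l :
  is_cderiv g t l -> is_cderiv (fun s => Cmul K (g s)) t (Cmul K l).
Proof.
  intros H; eapply is_cderiv_val; [exact (is_cderiv_mul _ _ t _ _ (is_cderiv_const K t) H)|].
  Cx_ring.
Qed.

Lemma is_cderiv_cis (phi : R -> R) t k :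
  derivable_pt_lim phi t k ->
  is_cderiv (fun s => (cos (phi s), sin (phi s))) t (Cmul (0, k) (cos (phi t), sin (phi t))).
Proof.
  intros H; split; simpl; eapply derivable_pt_lim_val.
  - exact (derivable_pt_lim_comp phi cos t k _ H (derivable_pt_lim_cos _)).
  - ring.
  - exact (derivable_pt_lim_comp phi sin t k _ H (derivable_pt_lim_sin _)).
  - ring.
Qed.

Lemma derivable_pt_lim_affine (p q t : R) : derivable_pt_lim (fun s => p - q * s) t (- q).
Proof.
  eapply derivable_pt_lim_val.
  - apply derivable_pt_lim_minus; [apply derivable_pt_lim_const|].
    apply derivable_pt_lim_scal, derivable_pt_lim_id.
  - ring.
Qed.

(* [Mono c d e] stands for [c u^d v^e]; exponents may repeat, and [pcoef] adds up the
   matching monomials. *)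
Inductive monomial := Mono (c : Cx) (d e : nat).
Definition poly := list monomial.

Fixpoint peval (L : poly) (u v : R) : Cx :=
  match L with
  | nil => C0
  | Mono c d e :: L' => Cadd (Cmul c (CR (u ^ d * v ^ e))) (peval L' u v)
  end.

Fixpoint pcoef (L : poly) (d e : nat) : Cx :=
  match L with
  | nil => C0
  | Mono c d' e' :: L' => Cadd (if (d' =? d) && (e' =? e) then c else C0) (pcoef L' d e)
  end.

Definition pscale (k : Cx) : poly -> poly := map (fun '(Mono c d e) => Mono (Cmul k c) d e).
Definition pmul_u : poly -> poly := map (fun '(Mono c d e) => Mono c (S d) e).
Definition pmul_v : poly -> poly := map (fun '(Mono c d e) => Mono c d (S e)).
Definition pderiv_u : poly -> poly :=
  map (fun '(Mono c d e) => Mono (Cmul c (CR (INR d))) (pred d) e).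
Definition pderiv_v : poly -> poly :=
  map (fun '(Mono c d e) => Mono (Cmul c (CR (INR e))) d (pred e)).

Fixpoint psum (n : nat) (g : nat -> poly) : poly :=
  match n with O => nil | S n' => psum n' g ++ g n' end.

Lemma peval_app L1 L2 u v : peval (L1 ++ L2) u v = Cadd (peval L1 u v) (peval L2 u v).
Proof. induction L1 as [|[c d e] L1 IH]; simpl; [|rewrite IH]; Cx_ring. Qed.

Lemma peval_pscale k L u v : peval (pscale k L) u v = Cmul k (peval L u v).
Proof. induction L as [|[c d e] L IH]; simpl; [|rewrite IH]; Cx_ring. Qed.

Lemma peval_pmul_u L u v : peval (pmul_u L) u v = Cmul (CR u) (peval L u v).
Proof. induction L as [|[c d e] L IH]; simpl; [|rewrite IH]; Cx_ring. Qed.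

Lemma peval_pmul_v L u v : peval (pmul_v L) u v = Cmul (CR v) (peval L u v).
Proof. induction L as [|[c d e] L IH]; simpl; [|rewrite IH]; Cx_ring. Qed.

Lemma peval_psum n g u v : peval (psum n g) u v = sumC n (fun i => peval (g i) u v).
Proof. induction n as [|n IH]; simpl; [|rewrite peval_app, IH]; reflexivity. Qed.

Lemma peval_0_0 L : peval L 0 0 = pcoef L 0 0.
Proof.
  induction L as [|[c d e] L IH]; simpl; [reflexivity|].
  rewrite IH; destruct d, e; simpl; Cx_ring.
Qed.

Lemma is_cderiv_peval_u L (f : R -> R) v t f' :
  derivable_pt_lim f t f' ->
  is_cderiv (fun s => peval L (f s) v) t (Cmul (CR f') (peval (pderiv_u L) (f t) v)).
Proof.
  intros Hf; induction L as [|[c d e] L IH]; simpl.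
  - eapply is_cderiv_val; [apply is_cderiv_const | Cx_ring].
  - eapply is_cderiv_val; [apply is_cderiv_add; [|exact IH]|].
    + apply is_cderiv_scale, is_cderiv_CR.
      apply (derivable_pt_lim_mult (fun s => f s ^ d) (fun _ => v ^ e)).
      * exact (derivable_pt_lim_comp f (fun x => x ^ d) t _ _ Hf (derivable_pt_lim_pow _ d)).
      * apply derivable_pt_lim_const.
    + destruct d; simpl; Cx_ring.
Qed.

Lemma is_cderiv_peval_v L (f : R -> R) u t f' :
  derivable_pt_lim f t f' ->
  is_cderiv (fun s => peval L u (f s)) t (Cmul (CR f') (peval (pderiv_v L) u (f t))).
Proof.
  intros Hf; induction L as [|[c d e] L IH]; simpl.
  - eapply is_cderiv_val; [apply is_cderiv_const | Cx_ring].
  - eapply is_cderiv_val; [apply is_cderiv_add; [|exact IH]|].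
    + apply is_cderiv_scale, is_cderiv_CR.
      apply (derivable_pt_lim_mult (fun _ => u ^ d) (fun s => f s ^ e)).
      * apply derivable_pt_lim_const.
      * exact (derivable_pt_lim_comp f (fun x => x ^ e) t _ _ Hf (derivable_pt_lim_pow _ e)).
    + destruct e; simpl; Cx_ring.
Qed.

Lemma pcoef_app L1 L2 d e : pcoef (L1 ++ L2) d e = Cadd (pcoef L1 d e) (pcoef L2 d e).
Proof. induction L1 as [|[c d' e'] L1 IH]; simpl; [|rewrite IH]; Cx_ring. Qed.

Lemma pcoef_pscale k L d e : pcoef (pscale k L) d e = Cmul k (pcoef L d e).
Proof.
  induction L as [|[c d' e'] L IH]; simpl; [|rewrite IH; destruct (_ && _)]; Cx_ring.
Qed.

Lemma pcoef_psum n g d e : pcoef (psum n g) d e = sumC n (fun i => pcoef (g i) d e).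
Proof. induction n as [|n IH]; simpl; [|rewrite pcoef_app, IH]; reflexivity. Qed.

Lemma pcoef_pmul_u L d e :
  pcoef (pmul_u L) d e = match d with O => C0 | S d' => pcoef L d' e end.
Proof.
  induction L as [|[c d' e'] L IH]; simpl; [now destruct d|].
  rewrite IH; destruct d; simpl; [Cx_ring | reflexivity].
Qed.

Lemma pcoef_pmul_v L d e :
  pcoef (pmul_v L) d e = match e with O => C0 | S e' => pcoef L d e' end.
Proof.
  induction L as [|[c d' e'] L IH]; simpl; [now destruct e|].
  rewrite IH; destruct e; simpl; [rewrite andb_false_r; Cx_ring | reflexivity].
Qed.

Lemma pcoef_pderiv_u L d e :
  pcoef (pderiv_u L) d e = Cmul (CR (INR (S d))) (pcoef L (S d) e).
Proof.
  induction L as [|[c d' e'] L IH]; simpl; [Cx_ring|].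
  rewrite IH; destruct d' as [|d']; simpl.
  - destruct (_ && _); Cx_ring.
  - destruct (Nat.eqb_spec d' d), (e' =? e); subst; simpl; Cx_ring.
Qed.

Lemma pcoef_pderiv_v L d e :
  pcoef (pderiv_v L) d e = Cmul (CR (INR (S e))) (pcoef L d (S e)).
Proof.
  induction L as [|[c d' e'] L IH]; simpl; [Cx_ring|].
  rewrite IH; destruct e' as [|e']; simpl.
  - rewrite andb_false_r; destruct (_ && _); Cx_ring.
  - destruct (d' =? d), (Nat.eqb_spec e' e); subst; simpl; Cx_ring.
Qed.

Lemma peval_pderiv_u_eq0 L :
  (forall u v, peval L u v = C0) -> forall u v, peval (pderiv_u L) u v = C0.
Proof.
  intros H u v.
  pose proof (is_cderiv_cderiv _ _ _
    (is_cderiv_peval_u L (fun s => s) v u 1 (derivable_pt_lim_id u))) as E.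
  cbv beta in E.
  replace (fun s => peval L s v) with (fun _ : R => C0) in E
    by (apply functional_extensionality; intros; now rewrite H).
  rewrite (is_cderiv_cderiv _ _ _ (is_cderiv_const C0 u)) in E.
  transitivity (Cmul (CR 1) (peval (pderiv_u L) u v)); [Cx_ring | now rewrite <- E].
Qed.

Lemma peval_pderiv_v_eq0 L :
  (forall u v, peval L u v = C0) -> forall u v, peval (pderiv_v L) u v = C0.
Proof.
  intros H u v.
  pose proof (is_cderiv_cderiv _ _ _
    (is_cderiv_peval_v L (fun s => s) u v 1 (derivable_pt_lim_id v))) as E.
  cbv beta in E.
  replace (fun s => peval L u s) with (fun _ : R => C0) in E
    by (apply functional_extensionality; intros; now rewrite H).
  rewrite (is_cderiv_cderiv _ _ _ (is_cderiv_const C0 v)) in E.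
  transitivity (Cmul (CR 1) (peval (pderiv_v L) u v)); [Cx_ring | now rewrite <- E].
Qed.

(* Coefficients are read off as Taylor coefficients at the origin. *)
Lemma pcoef_eq0_of_peval_eq0 L :
  (forall u v, peval L u v = C0) -> forall d e, pcoef L d e = C0.
Proof.
  intros H d; revert L H; induction d as [|d IHd]; intros L H e.
  - revert L H; induction e as [|e IHe]; intros L H.
    + rewrite <- peval_0_0; apply H.
    + apply (Cmul_CR_eq0 (INR (S e))); [apply not_0_INR; lia|].
      rewrite <- pcoef_pderiv_v; apply IHe, peval_pderiv_v_eq0, H.
  - apply (Cmul_CR_eq0 (INR (S d))); [apply not_0_INR; lia|].
    rewrite <- pcoef_pderiv_u; apply IHd, peval_pderiv_u_eq0, H.
Qed.

Lemma pcoef_eq0_of_pderiv_eq0 L d e :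
  (forall u v, peval (pderiv_u L) u v = C0) -> (forall u v, peval (pderiv_v L) u v = C0) ->
  (0 < d + e)%nat -> pcoef L d e = C0.
Proof.
  intros Hu Hv Hde; destruct d as [|d]; [destruct e as [|e]; [lia|]|].
  - apply (Cmul_CR_eq0 (INR (S e))); [apply not_0_INR; lia|].
    rewrite <- pcoef_pderiv_v; apply pcoef_eq0_of_peval_eq0, Hv.
  - apply (Cmul_CR_eq0 (INR (S d))); [apply not_0_INR; lia|].
    rewrite <- pcoef_pderiv_u; apply pcoef_eq0_of_peval_eq0, Hu.
Qed.

Definition pone : poly := Mono (CR 1) 0 0 :: nil.

(* With [u = al eta - be x] and [v = ga xi - de y], [al D_y - be M_x] maps
   [p(u, v) e^{i(x xi + y eta)}] to [(u p + i al de dp/dv) e^{i(x xi + y eta)}], and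
   symmetrically for [ga D_x - de M_y] (see [Pop_wave_poly]). *)
Definition Pop_poly (al de : R) (L : poly) : poly := pmul_u L ++ pscale (0, al * de) (pderiv_v L).
Definition Qop_poly (be ga : R) (L : poly) : poly := pmul_v L ++ pscale (0, be * ga) (pderiv_u L).

Definition twisted_poly (al be ga de : R) (a : nat -> nat -> Cx) (m : nat) : poly :=
  psum (S m) (fun j => psum (S (m - j)) (fun k =>
    pscale (Cmul (CR ((-1) ^ (j + k))) (a k j))
      (Nat.iter j (Pop_poly al de) (Nat.iter k (Qop_poly be ga) pone)))).

Definition top_monomial (L : poly) (j k : nat) : Prop :=
  (forall d e, (j + k < d + e)%nat -> pcoef L d e = C0) /\
  (forall d e, (d + e = j + k)%nat -> pcoef L d e = if (d =? j) && (e =? k) then CR 1 else C0).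

Lemma top_monomial_pone : top_monomial pone 0 0.
Proof. split; intros [|d] [|e] H; simpl; try lia; Cx_ring. Qed.

Lemma top_monomial_Pop_poly al de L j k :
  top_monomial L j k -> top_monomial (Pop_poly al de L) (S j) k.
Proof.
  intros [H1 H2]; unfold Pop_poly; split; intros d e H;
    rewrite pcoef_app, pcoef_pscale, pcoef_pmul_u, pcoef_pderiv_v, (H1 d (S e)) by lia;
    destruct d as [|d]; simpl; try Cx_ring.
  - rewrite H1 by lia; Cx_ring.
  - rewrite H2 by lia; destruct (_ && _); Cx_ring.
Qed.

Lemma top_monomial_Qop_poly be ga L j k :
  top_monomial L j k -> top_monomial (Qop_poly be ga L) j (S k).
Proof.
  intros [H1 H2]; unfold Qop_poly; split; intros d e H;
    rewrite pcoef_app, pcoef_pscale, pcoef_pmul_v, pcoef_pderiv_u, (H1 (S d) e) by lia;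
    destruct e as [|e]; simpl; rewrite ?andb_false_r; try Cx_ring.
  - rewrite H1 by lia; Cx_ring.
  - rewrite H2 by lia; destruct (_ && _); Cx_ring.
Qed.

Lemma top_monomial_iter al be ga de j k :
  top_monomial (Nat.iter j (Pop_poly al de) (Nat.iter k (Qop_poly be ga) pone)) j k.
Proof.
  induction j as [|j IHj]; simpl.
  - induction k as [|k IHk]; simpl; [apply top_monomial_pone | now apply top_monomial_Qop_poly].
  - now apply top_monomial_Pop_poly.
Qed.

Lemma pcoef_twisted_poly_top al be ga de a m j0 :
  (j0 <= m)%nat ->
  pcoef (twisted_poly al be ga de a m) j0 (m - j0) = Cmul (CR ((-1) ^ m)) (a (m - j0)%nat j0).
Proof.
  intros Hj0; unfold twisted_poly.
  assert (Htop : forall j k, (j + k <= m)%nat ->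
    pcoef (Nat.iter j (Pop_poly al de) (Nat.iter k (Qop_poly be ga) pone)) j0 (m - j0) =
    if (j0 =? j) && (m - j0 =? k) then CR 1 else C0).
  { intros j k Hjk; destruct (top_monomial_iter al be ga de j k) as [Hlow Htop].
    destruct (Nat.eq_dec (j + k) m).
    - apply Htop; lia.
    - rewrite Hlow by lia.
      destruct (Nat.eqb_spec j0 j), (Nat.eqb_spec (m - j0) k); simpl; auto; lia. }
  rewrite pcoef_psum, (sumC_single _ _ j0); [| lia |].
  - rewrite pcoef_psum, (sumC_single _ _ (m - j0)); [| lia |].
    + rewrite pcoef_pscale, Htop, !Nat.eqb_refl by lia.
      replace (j0 + (m - j0))%nat with m by lia; Cx_ring.
    + intros k Hk Hne; rewrite pcoef_pscale, Htop by lia.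
      destruct (Nat.eqb_spec (m - j0) k); [lia | rewrite andb_false_r; Cx_ring].
  - intros j Hj Hne; rewrite pcoef_psum; apply sumC_eq0; intros k Hk.
    rewrite pcoef_pscale, Htop by lia.
    destruct (Nat.eqb_spec j0 j); [lia | Cx_ring].
Qed.

Definition wave (xi eta : R) : Fn :=
  fun x y => (cos (x * xi + y * eta), sin (x * xi + y * eta)).
Definition scaled_wave (K : Cx) (xi eta : R) : Fn := fun x y => Cmul K (wave xi eta x y).

Lemma wave_unit xi eta x y : fst (wave xi eta x y) ^ 2 + snd (wave xi eta x y) ^ 2 = 1.
Proof. simpl; pose proof (sin2_cos2 (x * xi + y * eta)) as H; unfold Rsqr in H; lra. Qed.

Lemma wave_scaled xi eta : wave xi eta = scaled_wave (CR 1) xi eta.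
Proof. extensionality x; extensionality y; unfold scaled_wave; Cx_ring. Qed.

Lemma is_cderiv_wave_x xi eta y t :
  is_cderiv (fun s => wave xi eta s y) t (Cmul (0, xi) (wave xi eta t y)).
Proof.
  apply (is_cderiv_cis (fun s => s * xi + y * eta)).
  eapply derivable_pt_lim_val.
  - apply derivable_pt_lim_plus; [|apply derivable_pt_lim_const].
    apply (derivable_pt_lim_mult (fun s => s) (fun _ => xi));
      [apply derivable_pt_lim_id | apply derivable_pt_lim_const].
  - cbv beta; ring.
Qed.

Lemma is_cderiv_wave_y xi eta x t :
  is_cderiv (fun s => wave xi eta x s) t (Cmul (0, eta) (wave xi eta x t)).
Proof.
  apply (is_cderiv_cis (fun s => x * xi + s * eta)).
  eapply derivable_pt_lim_val.
  - apply derivable_pt_lim_plus; [apply derivable_pt_lim_const|].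
    apply (derivable_pt_lim_mult (fun s => s) (fun _ => eta));
      [apply derivable_pt_lim_id | apply derivable_pt_lim_const].
  - cbv beta; ring.
Qed.

Lemma pdx_scaled_wave K xi eta :
  pdx (scaled_wave K xi eta) = scaled_wave (Cmul (0, xi) K) xi eta.
Proof.
  extensionality x; extensionality y; unfold pdx, scaled_wave.
  rewrite (is_cderiv_cderiv _ _ _ (is_cderiv_scale K _ _ _ (is_cderiv_wave_x xi eta y x))).
  Cx_ring.
Qed.

Lemma pdy_scaled_wave K xi eta :
  pdy (scaled_wave K xi eta) = scaled_wave (Cmul (0, eta) K) xi eta.
Proof.
  extensionality x; extensionality y; unfold pdy, scaled_wave.
  rewrite (is_cderiv_cderiv _ _ _ (is_cderiv_scale K _ _ _ (is_cderiv_wave_y xi eta x y))).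
  Cx_ring.
Qed.

Lemma smooth_wave xi eta : smooth (wave xi eta).
Proof.
  assert (H : forall w, exists K, iter_pd w (wave xi eta) = scaled_wave K xi eta).
  { induction w as [|[|] w [K IH]]; simpl; rewrite ?IH.
    - exists (CR 1); apply wave_scaled.
    - exists (Cmul (0, xi) K); apply pdx_scaled_wave.
    - exists (Cmul (0, eta) K); apply pdy_scaled_wave. }
  intros w x y; destruct (H w) as [K ->]; unfold scaled_wave; split.
  - exact (is_cderiv_cderivable _ _ _ (is_cderiv_scale K _ _ _ (is_cderiv_wave_x xi eta y x))).
  - exact (is_cderiv_cderivable _ _ _ (is_cderiv_scale K _ _ _ (is_cderiv_wave_y xi eta x y))).
Qed.

Lemma Dx_iter_scaled_wave r K xi eta :
  Nat.iter r Dx (scaled_wave K xi eta) = scaled_wave (Cmul (CR (xi ^ r)) K) xi eta.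
Proof.
  induction r as [|r IH]; simpl.
  - f_equal; Cx_ring.
  - rewrite IH; unfold Dx; rewrite pdx_scaled_wave.
    extensionality x; extensionality y; unfold scaled_wave; Cx_ring.
Qed.

Lemma Dy_iter_scaled_wave r K xi eta :
  Nat.iter r Dy (scaled_wave K xi eta) = scaled_wave (Cmul (CR (eta ^ r)) K) xi eta.
Proof.
  induction r as [|r IH]; simpl.
  - f_equal; Cx_ring.
  - rewrite IH; unfold Dy; rewrite pdy_scaled_wave.
    extensionality x; extensionality y; unfold scaled_wave; Cx_ring.
Qed.

Lemma polyop_wave N c xi eta x y :
  polyop N c (wave xi eta) x y = Cmul (symbol N c x y xi eta) (wave xi eta x y).
Proof.
  unfold polyop, symbol, sum4.
  do 4 (rewrite <- sumC_Cmul_r; apply sumC_ext; intros ? _).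
  rewrite (wave_scaled xi eta) at 1.
  rewrite Dy_iter_scaled_wave, Dx_iter_scaled_wave; unfold scaled_wave; Cx_ring.
Qed.

Definition wave_poly (al be ga de xi eta : R) (L : poly) : Fn :=
  fun x y => Cmul (peval L (al * eta - be * x) (ga * xi - de * y)) (wave xi eta x y).

Lemma Pop_wave_poly al be ga de xi eta L :
  Pop al be (wave_poly al be ga de xi eta L) = wave_poly al be ga de xi eta (Pop_poly al de L).
Proof.
  extensionality x; extensionality y; unfold Pop, Dy, Mx, pdy, wave_poly.
  rewrite (is_cderiv_cderiv _ _ _ (is_cderiv_mul _ _ _ _ _
    (is_cderiv_peval_v L (fun t => ga * xi - de * t) (al * eta - be * x) y _
       (derivable_pt_lim_affine _ _ _))
    (is_cderiv_wave_y xi eta x y))).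
  unfold Pop_poly; rewrite peval_app, peval_pscale, peval_pmul_u; Cx_ring.
Qed.

Lemma Qop_wave_poly al be ga de xi eta L :
  Qop ga de (wave_poly al be ga de xi eta L) = wave_poly al be ga de xi eta (Qop_poly be ga L).
Proof.
  extensionality x; extensionality y; unfold Qop, Dx, My, pdx, wave_poly.
  rewrite (is_cderiv_cderiv _ _ _ (is_cderiv_mul _ _ _ _ _
    (is_cderiv_peval_u L (fun t => al * eta - be * t) (ga * xi - de * y) x _
       (derivable_pt_lim_affine _ _ _))
    (is_cderiv_wave_x xi eta y x))).
  unfold Qop_poly; rewrite peval_app, peval_pscale, peval_pmul_v; Cx_ring.
Qed.

Lemma twisted_wave al be ga de a m xi eta x y :
  twisted al be ga de a m (wave xi eta) x y =
  Cmul (peval (twisted_poly al be ga de a m) (al * eta - be * x) (ga * xi - de * y))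
       (wave xi eta x y).
Proof.
  unfold twisted, twisted_poly.
  rewrite peval_psum, <- sumC_Cmul_r; apply sumC_ext; intros j _.
  rewrite peval_psum, <- sumC_Cmul_r; apply sumC_ext; intros k _.
  replace (wave xi eta) with (wave_poly al be ga de xi eta pone) at 1
    by (extensionality x'; extensionality y'; unfold wave_poly, pone; simpl; Cx_ring).
  rewrite <- (Nat.iter_swap_gen _ _ _ _ _ (fun L => eq_sym (Qop_wave_poly al be ga de xi eta L))).
  rewrite <- (Nat.iter_swap_gen _ _ _ _ _ (fun L => eq_sym (Pop_wave_poly al be ga de xi eta L))).
  unfold wave_poly; rewrite peval_pscale; Cx_ring.
Qed.

Definition twist_symbol (L : poly) (al be ga de : R) : Sym :=
  fun x y xi eta => peval L (al * eta - be * x) (ga * xi - de * y).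

Lemma symbol_twisted al be ga de a m N c :
  (forall f : Fn, smooth f -> forall x y, twisted al be ga de a m f x y = polyop N c f x y) ->
  symbol N c = twist_symbol (twisted_poly al be ga de a m) al be ga de.
Proof.
  intros Hop; extensionality x; extensionality y; extensionality xi; extensionality eta.
  apply (Cmul_unit_cancel _ _ (wave xi eta x y)); [apply wave_unit|].
  rewrite <- polyop_wave; unfold twist_symbol; rewrite <- twisted_wave.
  symmetry; apply Hop, smooth_wave.
Qed.

Lemma exists_far_point al be ga de u v B :
  be <> 0 -> de <> 0 ->
  exists x y xi eta, nrm4 x y xi eta > B /\ al * eta - be * x = u /\ ga * xi - de * y = v.
Proof.
  intros Hb Hd.
  set (t := Rabs B + 1); assert (Ht : 0 <= B < t \/ B < 0 <= t).
  { unfold t; pose proof (Rle_abs B); pose proof (Rabs_pos B); lra. }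
  exists ((al * t - u) / be), (- v / de), 0, t; repeat split; [|field; auto..].
  unfold nrm4; replace (0 ^ 2 + t ^ 2) with (t ^ 2) by ring.
  rewrite sqrt_pow2 by lra.
  pose proof (sqrt_pos (((al * t - u) / be) ^ 2 + (- v / de) ^ 2)); lra.
Qed.

Lemma ratio_vanishing_at_infinity al be ga de (G H : R -> R -> Cx) :
  be <> 0 -> de <> 0 -> (forall u v, H u v <> C0) ->
  (forall eps, eps > 0 -> exists R1, forall x y xi eta, nrm4 x y xi eta > R1 ->
     Cnorm (Cdiv (G (al * eta - be * x) (ga * xi - de * y))
                 (H (al * eta - be * x) (ga * xi - de * y))) < eps) ->
  forall u v, G u v = C0.
Proof.
  intros Hb Hd HH Hlim u v; apply NNPP; intros HG.
  destruct (Hlim _ (Cnorm_pos _ (Cdiv_neq0 _ _ HG (HH u v)))) as [R1 HR1].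
  destruct (exists_far_point al be ga de u v R1 Hb Hd) as (x & y & xi & eta & Hfar & Hu & Hv).
  specialize (HR1 x y xi eta Hfar); rewrite Hu, Hv in HR1; lra.
Qed.

Lemma pd1_twist_symbol L al be ga de x y xi eta :
  pd1 (twist_symbol L al be ga de) x y xi eta =
  Cmul (CR (- be)) (peval (pderiv_u L) (al * eta - be * x) (ga * xi - de * y)).
Proof.
  apply is_cderiv_cderiv.
  apply (is_cderiv_peval_u L (fun t => al * eta - be * t)), derivable_pt_lim_affine.
Qed.

Lemma pd2_twist_symbol L al be ga de x y xi eta :
  pd2 (twist_symbol L al be ga de) x y xi eta =
  Cmul (CR (- de)) (peval (pderiv_v L) (al * eta - be * x) (ga * xi - de * y)).
Proof.
  apply is_cderiv_cderiv.
  apply (is_cderiv_peval_v L (fun t => ga * xi - de * t)), derivable_pt_lim_affine.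
Qed.

Lemma glob_hypoell_twist_symbol_const L al be ga de d e :
  be <> 0 -> de <> 0 -> glob_hypoell (twist_symbol L al be ga de) ->
  (0 < d + e)%nat -> pcoef L d e = C0.
Proof.
  intros Hb Hd [[R0 HR0] Hlim] Hde.
  assert (HL : forall u v, peval L u v <> C0).
  { intros u v.
    destruct (exists_far_point al be ga de u v R0 Hb Hd) as (x & y & xi & eta & Hfar & Hu & Hv).
    rewrite <- Hu, <- Hv; exact (HR0 x y xi eta Hfar). }
  apply pcoef_eq0_of_pderiv_eq0; [intros u v | intros u v | exact Hde].
  - apply (Cmul_CR_eq0 (- be)); [lra|].
    apply (ratio_vanishing_at_infinity al be ga de
             (fun u v => Cmul (CR (- be)) (peval (pderiv_u L) u v)) _ Hb Hd HL).
    intros eps Heps; destruct (Hlim pd1 ltac:(simpl; auto) eps Heps) as [R1 HR1].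
    exists R1; intros x y xi eta Hfar; rewrite <- pd1_twist_symbol; exact (HR1 x y xi eta Hfar).
  - apply (Cmul_CR_eq0 (- de)); [lra|].
    apply (ratio_vanishing_at_infinity al be ga de
             (fun u v => Cmul (CR (- de)) (peval (pderiv_v L) u v)) _ Hb Hd HL).
    intros eps Heps; destruct (Hlim pd2 ltac:(simpl; auto) eps Heps) as [R1 HR1].
    exists R1; intros x y xi eta Hfar; rewrite <- pd2_twist_symbol; exact (HR1 x y xi eta Hfar).
Qed.

Theorem proposition3p1 (al be ga de : R) (a : nat -> nat -> Cx) (m : nat) :
  twisted_data al be ga de a m -> (1 <= m)%nat ->
  forall (N : nat) (c : nat -> nat -> nat -> nat -> Cx),
    (forall f : Fn, smooth f ->
       forall x y : R, twisted al be ga de a m f x y = polyop N c f x y) ->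
    ~ glob_hypoell (symbol N c).
Proof.
  intros [_ [Hbd [j0 [Hj0 Ha]]]] Hm N c Hop Hell.
  assert (Hb : be <> 0) by (intros ->; apply Hbd; ring).
  assert (Hde : de <> 0) by (intros ->; apply Hbd; ring).
  rewrite (symbol_twisted al be ga de a m N c Hop) in Hell.
  apply Ha, (Cmul_CR_eq0 ((-1) ^ m)); [apply pow_nonzero; lra|].
  rewrite <- (pcoef_twisted_poly_top al be ga de a m j0 Hj0).
  apply (glob_hypoell_twist_symbol_const _ al be ga de); [exact Hb | exact Hde | exact Hell | lia].
Qed.
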